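(* Assume the noise-free case $M=I_n$, $N=0$ (so $Q=I_n$, $R(\mathcal D)=X_+-BU_-$ and $\Sigma(\mathcal D)=\{A\in\mathbb{R}^{n\times n}: X_+-BU_-=AX_-\}$), and assume $\Sigma(\mathcal D)\neq\varnothing$. Let $\mathcal F$ be the set of all $v\in\mathbb{R}^T$ such that $v\in\big(\mathcal J^*(\mathcal D)^\perp\cap\ker(CX_-)\big)\setminus\{0\}$ and $X_+v\notin X_+\mathcal J^*(\mathcal D)$. For $\lambda\in\mathbb{C}$ and $v\in\mathcal F$, define the perturbation $\Delta\mathcal D(\lambda,v):=(\Delta_{X_-},\Delta_{X_+},\Delta_{U_-},\Delta_{Y_-})$ with $\Delta_{X_-}=0$, $\Delta_{U_-}=0$, $\Delta_{Y_-}=0$ and $$\Delta_{X_+}:=(\lambda X_--X_++BU_-)v\,\zeta^\mathsf{T},\qquad \zeta:=\frac{\operatorname{proj}_{\mathcal S_+}(v)}{\|\operatorname{proj}_{\mathcal S_+}(v)\|_2^2},$$ so that $\|\Delta\mathcal D(\lambda,v)\|_{\mathrm F}^2=\|\Delta_{X_+}\|_{\mathrm F}^2=\|(\lambda X_--X_++BU_-)v\|_2^2/\|\operatorname{proj}_{\mathcal S_+}(v)\|_2^2$. Then $$\inf_{\lambda\in\mathbb{C},\,v\in\mathcal F}\|\Delta\mathcal D(\lambda,v)\|_{\mathrm F}\ \ge\ d_{\mathrm{UNOBS}}(\Sigma(\mathcal D))\,\sigma_{\min}(X_-).$$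
   Context: Setting. Let $n,m,p,T$ be positive integers, $B\in\mathbb{R}^{n\times m}$, $C\in\mathbb{R}^{p\times n}$, $D\in\mathbb{R}^{p\times m}$, and let $\mathcal D=(X_-,X_+,U_-,Y_-)$ be data with $X_-,X_+\in\mathbb{R}^{n\times T}$, $U_-\in\mathbb{R}^{m\times T}$, $Y_-\in\mathbb{R}^{p\times T}$. With $M=I_n$, $N=0$: $P(\mathcal D)=X_-$, $Q=I_n$, $R(\mathcal D)=X_+-BU_-$. The maximum weakly unobservable coefficient space $\mathcal J^*(\mathcal D)$ is the largest subspace $\mathcal J\subseteq\mathbb{R}^T$ satisfying $$\begin{bmatrix}R(\mathcal D)\\ CP(\mathcal D)\end{bmatrix}\mathcal J\subseteq \big(QP(\mathcal D)\mathcal J\big)\times\{0\}+\operatorname{im}\begin{bmatrix}QB\\ D\end{bmatrix}.$$ $\mathcal S_+:=\mathcal J^*(\mathcal D)^\perp\cap\operatorname{im}(X_+^\mathsf{T})$, and $\operatorname{proj}_{\mathcal S_+}$ is orthogonal projection onto it. For $A\in\mathbb{R}^{n\times n}$, $d_{\mathrm{UNOBS}}(A):=\inf_{\lambda\in\mathbb{C}}\sigma_{\min}\!\left(\begin{bmatrix}\lambda I_n-A\\ C\end{bmatrix}\right)$, where $\sigma_{\min}$ of this $(n+p)\times n$ complex matrix is its smallest ($n$-th) singular value, and $d_{\mathrm{UNOBS}}(\Sigma(\mathcal D)):=\inf_{A\in\Sigma(\mathcal D)}d_{\mathrm{UNOBS}}(A)$. $\sigma_{\min}(X_-)$ denotes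 the smallest of the $\min(n,T)$ singular values of $X_-$. The infimum over an empty set is $+\infty$. *)

From HB Require Import structures.
From mathcomp Require Import all_boot all_order all_algebra.
From mathcomp Require Import all_classical all_reals ereal.
From mathcomp.real_closed Require Import complex.

Set Implicit Arguments.
Unset Strict Implicit.
Unset Printing Implicit Defensive.

Import Order.TTheory GRing.Theory Num.Theory.
Local Open Scope ring_scope.
Local Open Scope complex_scope.
Local Open Scope classical_set_scope.

Section Defs.
Variable R : realType.
Local Notation C := R[i].

Definition toC {k l : nat} (M : 'M[R]_(k, l)) : 'M[C]_(k, l) :=
  map_mx (fun x : R => x%:C) M.

Definition adjmx {k l : nat} (M : 'M[C]_(k, l)) : 'M[C]_(l, k) :=
  map_mx (@conjc R) M^T.

Definition sqmod (z : C) : R := let: a +i* b := z in a ^+ 2 + b ^+ 2.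

Definition fro2 {k l : nat} (M : 'M[C]_(k, l)) : R :=
  \sum_(i < k) \sum_(j < l) sqmod (M i j).

Definition nrm2 {k : nat} (v : 'rV[R]_k) : R := \sum_(j < k) v 0 j ^+ 2.

(* smallest eigenvalue of a (Hermitian, hence real-spectrum) complex matrix *)
Definition min_eig {k : nat} (G : 'M[C]_k) : R :=
  inf [set x : R | eigenvalue G x%:C].

(* smallest of the min(k,l) singular values of M : 'M_(k,l); the singular
   values are the square roots of the eigenvalues of M^* M (if l <= k) or of
   M M^* (if k < l). *)
Definition sigma_min {k l : nat} (M : 'M[C]_(k, l)) : R :=
  if (l <= k)%N then Num.sqrt (min_eig (adjmx M *m M))
  else Num.sqrt (min_eig (M *m adjmx M)).

(* orthogonal complement (in R^T, vectors as rows) of the row space of J *)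
Definition perp {T : nat} (J : 'M[R]_T) : 'M[R]_T := kermx J^T.

(* matrix of the orthogonal projection (acting on rows by right product)
   onto the row space of S *)
Definition proj_mx {T k : nat} (S : 'M[R]_(k, T)) : 'M[R]_T :=
  let Bs := row_base S in Bs^T *m invmx (Bs *m Bs^T) *m Bs.

Definition proj {T k : nat} (S : 'M[R]_(k, T)) (v : 'rV[R]_T) : 'rV[R]_T :=
  v *m proj_mx S.

Section Data.
Variables (n m p T : nat).
Variables (B : 'M[R]_(n, m)) (Cm : 'M[R]_(p, n)) (D : 'M[R]_(p, m)).
Variables (Xm Xp : 'M[R]_(n, T)) (Um : 'M[R]_(m, T)) (Ym : 'M[R]_(p, T)).

(* noise-free case M = I_n, N = 0 *)
Definition Pdat : 'M[R]_(n, T) := Xm.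
Definition Qdat : 'M[R]_n := 1%:M.
Definition Rdat : 'M[R]_(n, T) := Xp - B *m Um.

(* J (a subspace of R^T given as a row space) is a weakly unobservable
   coefficient space:  [R; C P] J <= (Q P J) x {0} + im [Q B; D]   *)
Definition weakly_unobs_coeff (J : 'M[R]_T) : Prop :=
  forall j : 'rV[R]_T, (j <= J)%MS ->
    exists (j' : 'rV[R]_T) (u : 'cV[R]_m),
      (j' <= J)%MS /\
      Rdat *m j^T = Qdat *m Pdat *m j'^T + Qdat *m B *m u /\
      Cm *m Pdat *m j^T = D *m u.

Definition is_Jstar (J : 'M[R]_T) : Prop :=
  weakly_unobs_coeff J /\
  forall J' : 'M[R]_T, weakly_unobs_coeff J' -> (J' <= J)%MS.

(* S_+ = J^perp cap im(X_+^T) *)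
Definition Splus_cap (J : 'M[R]_T) : 'M[R]_T := (perp J :&: Xp)%MS.

Definition Sigma : set 'M[R]_n := [set A | Xp - B *m Um = A *m Xm].

Definition d_unobs (A : 'M[R]_n) : \bar R :=
  ereal_inf [set (sigma_min (col_mx (lam%:M - toC A) (toC Cm)))%:E
            | lam in [set: C]].

Definition d_unobs_Sigma : \bar R := ereal_inf [set d_unobs A | A in Sigma].

Definition in_F (J : 'M[R]_T) (v : 'rV[R]_T) : Prop :=
  (v <= perp J)%MS /\ Cm *m Xm *m v^T = 0 /\ v != 0 /\
  ~ (exists j : 'rV[R]_T, (j <= J)%MS /\ Xp *m v^T = Xp *m j^T).

Definition zeta (J : 'M[R]_T) (v : 'rV[R]_T) : 'rV[R]_T :=
  (nrm2 (proj (Splus_cap J) v))^-1 *: proj (Splus_cap J) v.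

Definition DeltaXp (J : 'M[R]_T) (lam : C) (v : 'rV[R]_T) : 'M[C]_(n, T) :=
  ((lam *: toC Xm - toC Xp + toC (B *m Um)) *m toC v^T) *m toC (zeta J v).

Definition DeltaD (J : 'M[R]_T) (lam : C) (v : 'rV[R]_T) :
  'M[C]_(n, T) * 'M[C]_(n, T) * 'M[C]_(m, T) * 'M[C]_(p, T) :=
  (0, DeltaXp J lam v, 0, 0).

Definition fro_data
  (d : 'M[C]_(n, T) * 'M[C]_(n, T) * 'M[C]_(m, T) * 'M[C]_(p, T)) : R :=
  let: (dXm, dXp, dUm, dYm) := d in
  Num.sqrt (fro2 dXm + fro2 dXp + fro2 dUm + fro2 dYm).

End Data.
End Defs.

From Pilot Require Import Defs.
From HB Require Import structures.
From mathcomp Require Import all_boot all_order all_algebra.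
From mathcomp Require Import all_classical all_reals ereal.
From mathcomp.real_closed Require Import complex.
From mathcomp Require Import spectral sesquilinear.
From mathcomp Require Import ring lra.
Import Order.TTheory GRing.Theory Num.Theory.
Local Open Scope ring_scope.
Local Open Scope classical_set_scope.
Local Open Scope complex_scope.

Set Implicit Arguments.
Unset Strict Implicit.

(* Fix [A] in [Sigma]; then [Xp - B Um = A Xm], so the perturbation has squared
   norm [|(lam - A) Xm v|^2 / |proj v|^2].  As [Cm Xm v = 0], the numerator is
   [|[lam - A; Cm] Xm v|^2 >= sigma_min([lam - A; Cm])^2 |Xm v|^2].  Adding
   [ker Xm] to a weakly unobservable coefficient space keeps it weakly
   unobservable, so [ker Xm <= J^*] by maximality; hence [v] in [J^*^perp] lies
   in the row space of [Xm], where [|Xm v| >= sigma_min(Xm) |v|], and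
   [|v| >= |proj v|].  The denominator is nonzero because [Xp v] is not in
   [Xp J^*].  Both singular-value estimates are Rayleigh-quotient bounds
   obtained from the unitary diagonalization of a Gram matrix [M^* M]. *)

Section ComplexNorm.
Variable R : realType.
Local Notation C := R[i].

Lemma sqmodE (z : C) : (sqmod z)%:C = conjc z * z.
Proof.
case: z => a b; apply/eqP; rewrite eq_complex /=.
by apply/andP; split; apply/eqP; rewrite ?expr2; lra.
Qed.

Lemma sqmod_ge0 (z : C) : 0 <= sqmod z.
Proof. by case: z => a b /=; rewrite addr_ge0 // sqr_ge0. Qed.

Lemma sqmod_eq0 (z : C) : (sqmod z == 0) = (z == 0).
Proof.
case: z => a b /=; rewrite paddr_eq0 ?sqr_ge0 // !sqrf_eq0.
by rewrite eq_complex.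
Qed.

Lemma sqmodR (x : R) : sqmod x%:C = x ^+ 2.
Proof. by rewrite /= expr0n addr0. Qed.

Lemma sqmodMR (z : C) (x : R) : sqmod (z * x%:C) = sqmod z * x ^+ 2.
Proof. by case: z => a b /=; ring. Qed.

Definition cnrm2 {k : nat} (x : 'cV[C]_k) : R := \sum_i sqmod (x i 0).

Lemma cnrm2_ge0 k (x : 'cV[C]_k) : 0 <= cnrm2 x.
Proof. by apply: sumr_ge0 => i _; exact: sqmod_ge0. Qed.

Lemma cnrm2_eq0 k (x : 'cV[C]_k) : cnrm2 x = 0 -> x = 0.
Proof.
move/eqP; rewrite psumr_eq0 => [/allP x0|i _]; last exact: sqmod_ge0.
apply/colP => i; rewrite mxE; apply/eqP.
by rewrite -sqmod_eq0 (implyP (x0 i _)) ?mem_index_enum.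
Qed.

Lemma cnrm2_gt0 k (x : 'cV[C]_k) : x != 0 -> 0 < cnrm2 x.
Proof.
move=> x0; rewrite lt_def cnrm2_ge0 andbT.
by apply: contra x0 => /eqP/cnrm2_eq0 ->.
Qed.

Lemma cnrm2_col_mx k1 k2 (a : 'cV[C]_k1) (b : 'cV[C]_k2) :
  cnrm2 (col_mx a b) = cnrm2 a + cnrm2 b.
Proof.
rewrite /cnrm2 big_split_ord /=.
by congr (_ + _); apply: eq_bigr => i _; rewrite ?col_mxEu ?col_mxEd.
Qed.

Lemma cnrm20 k : cnrm2 (0 : 'cV[C]_k) = 0.
Proof. by rewrite /cnrm2 big1 // => i _; rewrite mxE sqmodR expr0n. Qed.

Lemma adjmxE k l (M : 'M[C]_(k, l)) : adjmx M = (M ^t*)%sesqui.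
Proof. by []. Qed.

Lemma adjmxM k l r (A : 'M[C]_(k, l)) (B : 'M[C]_(l, r)) :
  adjmx (A *m B) = adjmx B *m adjmx A.
Proof. by rewrite !adjmxE trmx_mul map_mxM. Qed.

Lemma adjmxK k l (A : 'M[C]_(k, l)) : adjmx (adjmx A) = A.
Proof. by rewrite !adjmxE trmxCK. Qed.

Lemma cnrm2E k (x : 'cV[C]_k) : (adjmx x *m x) 0 0 = (cnrm2 x)%:C.
Proof.
rewrite /cnrm2 rmorph_sum mxE; apply: eq_bigr => i _ /=.
by rewrite -[RHS]/((sqmod (x i 0))%:C) sqmodE !mxE.
Qed.

Lemma cnrm2_unitary l (P : 'M[C]_l) (z : 'cV[C]_l) :
  adjmx P *m P = 1%:M -> cnrm2 (P *m z) = cnrm2 z.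
Proof.
move=> PaP; apply: complexI; rewrite -!cnrm2E adjmxM.
by rewrite -mulmxA [adjmx P *m _]mulmxA PaP mul1mx.
Qed.

End ComplexNorm.

Section GramSpectrum.
Variable R : realType.
Local Notation C := R[i].

Lemma gram_eigenvalue_ge0 k l (M : 'M[C]_(k, l)) (y : R) :
  eigenvalue (adjmx M *m M) y%:C -> 0 <= y.
Proof.
case/eigenvalueP => v vG v0.
have v0' : 0 < cnrm2 (adjmx v).
  apply: cnrm2_gt0; apply: contra v0 => /eqP v0'.
  by rewrite -[v]adjmxK v0' adjmxE trmx0 map_mx0.
have : cnrm2 (M *m adjmx v) = y * cnrm2 (adjmx v).
  apply: complexI; rewrite rmorphM /= -!cnrm2E adjmxM adjmxK mulmxA.
  by rewrite -(mulmxA v) vG -scalemxAl mxE.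
by move=> e; rewrite -(pmulr_lge0 _ v0') -e cnrm2_ge0.
Qed.

Lemma gram_min_eig_le k l (M : 'M[C]_(k, l)) (y : R) :
  eigenvalue (adjmx M *m M) y%:C -> min_eig (adjmx M *m M) <= y.
Proof.
by move=> ey; apply: ge_inf => //; exists 0 => z /gram_eigenvalue_ge0.
Qed.

Lemma adjmx_mul_diagE k l (N : 'M[C]_(k, l)) i :
  (adjmx N *m N) i i = (cnrm2 (col i N))%:C.
Proof. by rewrite -cnrm2E !mxE; apply: eq_bigr => j _; rewrite !mxE. Qed.

(* The diagonal of [P G P^*] is the Gram diagonal of [M P^*], hence real. *)
Lemma gram_diagonalization k l (M : 'M[C]_(k, l)) :
  exists (P : 'M[C]_l) (r : 'rV[R]_l),
  [/\ adjmx P *m P = 1%:M, forall i, eigenvalue (adjmx M *m M) (r 0 i)%:C &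
      adjmx M *m M = adjmx P *m diag_mx (toC r) *m P].
Proof.
set G := adjmx M *m M; set P := spectralmx G; set d := spectral_diag G.
have Gn : G \is normalmx.
  by apply/normalmxP; rewrite -adjmxE /G adjmxM adjmxK.
have PU : P \is unitarymx := spectral_unitarymx G.
have PPa : P *m adjmx P = 1%:M by apply/unitarymxP.
have PaP : adjmx P *m P = 1%:M.
  by rewrite adjmxE -invmx_unitary // mulVmx // spectral_unit.
have GE : G = adjmx P *m diag_mx d *m P.
  by rewrite adjmxE -invmx_unitary //; exact/orthomx_spectralP.
have PG : P *m G = diag_mx d *m P.
  by rewrite GE !mulmxA PPa mul1mx.
have dE i : d 0 i = (cnrm2 (col i (M *m adjmx P)))%:C.
  rewrite -adjmx_mul_diagE adjmxM adjmxK mulmxA -(mulmxA P) -/G PG.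
  by rewrite -mulmxA PPa mulmx1 mxE eqxx mulr1n.
exists P, (\row_i cnrm2 (col i (M *m adjmx P))); split => //.
- move=> i; rewrite mxE -dE; apply/eigenvalueP; exists (row i P).
    by rewrite -row_mul PG mul_diag_mx; apply/rowP => j; rewrite !mxE.
  apply: contraTneq isT => Pi0.
  have /rowP/(_ i) := congr1 (row i) PPa.
  by rewrite row_mul Pi0 mul0mx !mxE eqxx => /eqP; rewrite eq_sym oner_eq0.
- rewrite {1}GE; congr (_ *m diag_mx _ *m _); apply/rowP => i.
  by rewrite !mxE dE.
Qed.

Lemma quadform_diag l (P : 'M[C]_l) (r : 'rV[R]_l) (z : 'cV[C]_l) :
  (adjmx z *m (adjmx P *m diag_mx (toC r) *m P) *m z) 0 0
  = (\sum_i r 0 i * sqmod ((P *m z) i 0))%:C.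
Proof.
rewrite !mulmxA -adjmxM -mulmxA -[adjmx _ *m _ *m _]mulmxA mul_diag_mx.
rewrite rmorph_sum mxE; apply: eq_bigr => i _.
by rewrite rmorphM /= sqmodE !mxE mulrCA mulrA.
Qed.

Lemma rayleigh k l (M : 'M[C]_(k, l)) (x : 'cV[C]_l) :
  min_eig (adjmx M *m M) * cnrm2 x <= cnrm2 (M *m x).
Proof.
have [P [r [PaP reig GE]]] := gram_diagonalization M.
have -> : cnrm2 (M *m x) = \sum_i r 0 i * sqmod ((P *m x) i 0).
  by apply: complexI; rewrite -quadform_diag -GE -cnrm2E adjmxM !mulmxA.
rewrite -(cnrm2_unitary x PaP) mulr_sumr; apply: ler_sum => i _.
by rewrite ler_wpM2r ?sqmod_ge0 ?gram_min_eig_le.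
Qed.

Lemma rayleigh_gram k l (M : 'M[C]_(k, l)) (x : 'cV[C]_l) :
  min_eig (adjmx M *m M) * cnrm2 (M *m x) <= cnrm2 (adjmx M *m M *m x).
Proof.
have [P [r [PaP reig GE]]] := gram_diagonalization M.
set r2 := map_mx (fun t => t ^+ 2) r.
have G2E : adjmx (adjmx M *m M) *m (adjmx M *m M)
           = adjmx P *m diag_mx (toC r2) *m P.
  rewrite adjmxM adjmxK GE -!mulmxA; congr (_ *m _).
  rewrite !mulmxA -[_ *m P *m adjmx P]mulmxA (mulmx1C PaP) mulmx1 mulmx_diag.
  by congr (diag_mx _ *m _); apply/rowP => i; rewrite !mxE rmorphXn.
have -> : cnrm2 (M *m x) = \sum_i r 0 i * sqmod ((P *m x) i 0).
  by apply: complexI; rewrite -quadform_diag -GE -cnrm2E adjmxM !mulmxA.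
have -> : cnrm2 (adjmx M *m M *m x) = \sum_i r2 0 i * sqmod ((P *m x) i 0).
  by apply: complexI; rewrite -quadform_diag -G2E -cnrm2E adjmxM !mulmxA.
rewrite mulr_sumr; apply: ler_sum => i _; rewrite mulrA [r2 0 i]mxE expr2.
rewrite ler_wpM2r ?sqmod_ge0 // ler_wpM2r ?gram_min_eig_le //.
exact: gram_eigenvalue_ge0 (reig i).
Qed.

End GramSpectrum.

Section RealLinearAlgebra.
Variable R : realType.

Lemma kermx_trS k1 k2 T (Y : 'M[R]_(k1, T)) (Z : 'M[R]_(k2, T)) :
  (Y <= Z)%MS -> (kermx Z^T <= kermx Y^T)%MS.
Proof.
case/submxP => D ->; rewrite sub_kermx trmx_mul mulmxA.
by rewrite mulmx_ker mul0mx.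
Qed.

Lemma kermx_trK k T (X : 'M[R]_(k, T)) : (kermx (kermx X^T)^T <= X)%MS.
Proof.
have sX : (X <= kermx (kermx X^T)^T)%MS.
  by rewrite sub_kermx -[X in X *m _]trmxK -trmx_mul mulmx_ker trmx0.
case: (mxrank_leqif_sup sX) => _ <-.
rewrite !mxrank_ker !mxrank_tr mxrank_ker mxrank_tr subKn //.
exact: rank_leq_col.
Qed.

Lemma nrm2E k (y : 'rV[R]_k) : nrm2 y = (y *m y^T) 0 0.
Proof. by rewrite mxE; apply: eq_bigr => i _; rewrite mxE expr2. Qed.

Lemma nrm2_ge0 k (y : 'rV[R]_k) : 0 <= nrm2 y.
Proof. by apply: sumr_ge0 => i _; exact: sqr_ge0. Qed.

Lemma nrm2_eq0 k (y : 'rV[R]_k) : nrm2 y = 0 -> y = 0.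
Proof.
move/eqP; rewrite psumr_eq0 => [/allP y0|i _]; last exact: sqr_ge0.
apply/rowP => j; rewrite mxE; apply/eqP.
by rewrite -sqrf_eq0 (implyP (y0 j _)) ?mem_index_enum.
Qed.

Lemma nrm2_gt0 k (y : 'rV[R]_k) : y != 0 -> 0 < nrm2 y.
Proof.
move=> y0; rewrite lt_def nrm2_ge0 andbT.
by apply: contra y0 => /eqP/nrm2_eq0 ->.
Qed.

Lemma nrm2Z k (c : R) (y : 'rV[R]_k) : nrm2 (c *: y) = c ^+ 2 * nrm2 y.
Proof.
by rewrite /nrm2 mulr_sumr; apply: eq_bigr => j _; rewrite mxE exprMn.
Qed.

Lemma row_free_gram_unit k T (Bs : 'M[R]_(k, T)) :
  row_free Bs -> Bs *m Bs^T \in unitmx.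
Proof.
move=> fB; rewrite -row_free_unit -kermx_eq0; apply/eqP/row_matrixP => i.
set y := row i (kermx _).
have yG : y *m (Bs *m Bs^T) = 0 by rewrite -row_mul mulmx_ker row0.
have : y *m Bs = 0.
  apply: nrm2_eq0; rewrite nrm2E trmx_mul !mulmxA -(mulmxA y) yG mul0mx.
  by rewrite mxE.
by move/eqP; rewrite mulmx_free_eq0 // row0 => /eqP.
Qed.

Lemma nrm2_sym_idem_le T (Pi : 'M[R]_T) (v : 'rV[R]_T) :
  Pi^T = Pi -> Pi *m Pi = Pi -> nrm2 (v *m Pi) <= nrm2 v.
Proof.
move=> PiT PiPi; set p := v *m Pi; set e := v - p.
have pe : p *m e^T = 0.
  rewrite /e /p linearB /= trmx_mul PiT mulmxBr.
  by rewrite mulmxA -(mulmxA v Pi Pi) PiPi subrr.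
have ep : e *m p^T = 0 by rewrite -[e *m _]trmxK trmx_mul trmxK pe trmx0.
rewrite !nrm2E -[v in X in _ <= X](subrK p) -/e addrC.
rewrite linearD /= mulmxDl !mulmxDr pe ep addr0 add0r [X in _ <= X]mxE lerDl.
by rewrite -nrm2E nrm2_ge0.
Qed.

Section Projection.
Variables (k T : nat) (S : 'M[R]_(k, T)).
Local Notation Bs := (row_base S).
Local Notation Pi := (Defs.proj_mx S).

Let gram_unit : Bs *m Bs^T \in unitmx.
Proof. exact/row_free_gram_unit/row_base_free. Qed.

Lemma proj_mx_sym : Pi^T = Pi.
Proof.
rewrite /Defs.proj_mx; move: Bs => B.
by rewrite !trmx_mul !trmxK trmx_inv trmx_mul trmxK mulmxA.
Qed.

Lemma proj_mx_idem : Pi *m Pi = Pi.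
Proof.
rewrite /Defs.proj_mx; move: Bs gram_unit => B GU.
rewrite !mulmxA -[_ *m B *m B^T]mulmxA.
by rewrite -[_ *m (B *m B^T)]mulmxA mulVmx // mulmx1.
Qed.

Lemma nrm2_proj_le (v : 'rV[R]_T) : nrm2 (Defs.proj S v) <= nrm2 v.
Proof. exact: nrm2_sym_idem_le proj_mx_sym proj_mx_idem. Qed.

Lemma proj_eq0 (v : 'rV[R]_T) :
  Defs.proj S v = 0 -> (v <= kermx S^T)%MS.
Proof.
move=> Pv0; apply: submx_trans (kermx_trS (_ : S <= Bs)%MS); last first.
  by rewrite eq_row_base.
have PiB : Pi *m Bs^T = Bs^T.
  rewrite /Defs.proj_mx; move: Bs gram_unit => B GU.
  by rewrite -!mulmxA mulVmx // mulmx1.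
by rewrite sub_kermx -PiB mulmxA -/(Defs.proj S v) Pv0 mul0mx.
Qed.

End Projection.
End RealLinearAlgebra.

Section Complexification.
Variable R : realType.
Local Notation C := R[i].

Lemma toCM k l r (A : 'M[R]_(k, l)) (B : 'M[R]_(l, r)) :
  toC (A *m B) = toC A *m toC B.
Proof. exact: map_mxM. Qed.

Lemma toCB k l (A B : 'M[R]_(k, l)) : toC (A - B) = toC A - toC B.
Proof. exact: map_mxB. Qed.

Lemma toC0 k l : toC (0 : 'M[R]_(k, l)) = 0.
Proof. exact: map_mx0. Qed.

Lemma adjmx_toC k l (A : 'M[R]_(k, l)) : adjmx (toC A) = toC A^T.
Proof. by apply/matrixP => i j; rewrite !mxE conjc_real. Qed.

Lemma cnrm2_toC k (c : 'cV[R]_k) : cnrm2 (toC c) = nrm2 c^T.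
Proof. by apply: eq_bigr => i _; rewrite !mxE sqmodR. Qed.

Lemma fro2_outer k T (a : 'cV[C]_k) (z : 'rV[R]_T) :
  fro2 (a *m toC z) = cnrm2 a * nrm2 z.
Proof.
rewrite /fro2 /cnrm2 mulr_suml; apply: eq_bigr => i _.
rewrite /nrm2 mulr_sumr; apply: eq_bigr => j _.
by rewrite mxE big_ord1 mxE sqmodMR.
Qed.

Lemma fro20 k l : fro2 (0 : 'M[C]_(k, l)) = 0.
Proof.
rewrite /fro2 big1 // => i _; rewrite big1 // => j _.
by rewrite mxE sqmodR expr0n.
Qed.

Lemma fro_data_ge0 n m p T
    (d : 'M[C]_(n, T) * 'M[C]_(n, T) * 'M[C]_(m, T) * 'M[C]_(p, T)) :
  0 <= fro_data d.
Proof. by case: d => [[[? ?] ?] ?]; exact: sqrtr_ge0. Qed.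

End Complexification.

Section SigmaMin.
Variable R : realType.
Local Notation C := R[i].

Lemma sigma_min_ge0 k l (M : 'M[C]_(k, l)) : 0 <= sigma_min M.
Proof. by rewrite /sigma_min; case: ifP => _; exact: sqrtr_ge0. Qed.

(* When [mu < 0] the square root is [0] and the claim reduces to [0 <= Y]. *)
Lemma sqr_sqrtr_mul_le (mu N Y : R) :
  mu * N <= Y -> 0 <= Y -> Num.sqrt mu ^+ 2 * N <= Y.
Proof.
move=> muNY Y0; case: (leP 0 mu) => [mu0|/ltW mu0]; first by rewrite sqr_sqrtr.
by rewrite ler0_sqrtr // expr0n mul0r.
Qed.

Lemma sigma_min_tall k l (M : 'M[C]_(k, l)) (x : 'cV[C]_l) : (l <= k)%N ->
  sigma_min M ^+ 2 * cnrm2 x <= cnrm2 (M *m x).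
Proof.
move=> lk; rewrite /sigma_min lk.
by apply: sqr_sqrtr_mul_le; [exact: rayleigh | exact: cnrm2_ge0].
Qed.

(* For a wide [X], write [v = u X] and bound [X X^T u] via the Gram
   matrix of [X^T]. *)
Lemma sigma_min_row_space k T (X : 'M[R]_(k, T)) (v : 'rV[R]_T) :
  (v <= X)%MS -> sigma_min (toC X) ^+ 2 * nrm2 v <= cnrm2 (toC (X *m v^T)).
Proof.
move=> vX; case: (leqP T k) => [Tk|kT].
  by have := sigma_min_tall (toC X) (toC v^T) Tk; rewrite cnrm2_toC trmxK toCM.
have [u ->] := submxP vX.
rewrite /sigma_min leqNgt kT /=; apply: sqr_sqrtr_mul_le; last exact: cnrm2_ge0.
have := rayleigh_gram (adjmx (toC X)) (toC u^T).
rewrite adjmxK !adjmx_toC -!toCM -trmx_mul !cnrm2_toC trmxK.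
by rewrite [(u *m X)^T]trmx_mul mulmxA.
Qed.

Lemma sigma_min_unobs k r (A : 'M[R]_k) (Cm : 'M[R]_(r, k)) (lam : C)
    (w : 'cV[R]_k) : Cm *m w = 0 ->
  sigma_min (col_mx (lam%:M - toC A) (toC Cm)) ^+ 2 * cnrm2 (toC w)
  <= cnrm2 ((lam%:M - toC A) *m toC w).
Proof.
move=> Cw; have := sigma_min_tall (col_mx (lam%:M - toC A) (toC Cm)) (toC w).
rewrite mul_col_mx -toCM Cw toC0 cnrm2_col_mx cnrm20 addr0.
by apply; exact: leq_addr.
Qed.

End SigmaMin.

Section Data.
Variables (R : realType) (n m p T : nat).
Variables (B : 'M[R]_(n, m)) (Cm : 'M[R]_(p, n)) (D : 'M[R]_(p, m)).
Variables (Xm Xp : 'M[R]_(n, T)) (Um : 'M[R]_(m, T)).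
Variable A : 'M[R]_n.
Hypothesis hA : Sigma B Xm Xp Um A.

Let XpBUm : Xp - B *m Um = A *m Xm := hA.

Local Notation Jstar := (is_Jstar B Cm D Xm Xp Um).

(* Coefficients in [ker Xm] are invisible to [Cm Xm] and, since
   [Xp - B Um = A Xm], to the residual [Xp - B Um] as well. *)
Lemma weakly_unobs_coeff_addsmx_ker (J : 'M[R]_T) :
  weakly_unobs_coeff B Cm D Xm Xp Um J ->
  weakly_unobs_coeff B Cm D Xm Xp Um (J + kermx Xm^T)%MS.
Proof.
move=> wJ j /sub_addsmxP [[u1 u2] /= ->].
have [j' [u [sj' [e1 e2]]]] := wJ (u1 *m J) (submxMl _ _).
have kX : Xm *m (u2 *m kermx Xm^T)^T = 0.
  by rewrite -[Xm in Xm *m _]trmxK -trmx_mul -mulmxA mulmx_ker mulmx0 trmx0.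
exists j', u; split; first exact: submx_trans sj' (addsmxSl _ _).
move: e1 e2; rewrite /Rdat /Pdat /Qdat !mul1mx => e1 e2.
by rewrite linearD /= !mulmxDr -e1 -e2 XpBUm -!mulmxA kX !mulmx0 !addr0.
Qed.

Lemma kermx_sub_Jstar (J : 'M[R]_T) : Jstar J -> (kermx Xm^T <= J)%MS.
Proof.
case=> wJ maxJ; apply: submx_trans (addsmxSr J _) _.
exact/maxJ/weakly_unobs_coeff_addsmx_ker.
Qed.

Lemma in_F_sub_row_space (J : 'M[R]_T) (v : 'rV[R]_T) :
  Jstar J -> in_F Cm Xm Xp J v -> (v <= Xm)%MS.
Proof.
move=> /kermx_sub_Jstar KJ [vJ _]; apply: submx_trans vJ _.
exact: submx_trans (kermx_trS KJ) (kermx_trK Xm).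
Qed.

(* A [v] orthogonal to [S_+ = J^perp :&: im Xp^T] lies in [J + ker Xp]. *)
Lemma in_F_proj_neq0 (J : 'M[R]_T) (v : 'rV[R]_T) :
  in_F Cm Xm Xp J v -> Defs.proj (Splus_cap Xp J) v != 0.
Proof.
case=> _ [_ [_ vJ]]; apply/eqP => /proj_eq0 vS; apply: vJ.
set Y := (J + kermx Xp^T)%MS.
have YS : (kermx Y^T <= Splus_cap Xp J)%MS.
  rewrite sub_capmx (kermx_trS (addsmxSl _ _)).
  exact: submx_trans (kermx_trS (addsmxSr J _)) (kermx_trK Xp).
have /sub_addsmxP [[a b] /= vE] : (v <= Y)%MS.
  exact: submx_trans vS (submx_trans (kermx_trS YS) (kermx_trK Y)).
exists (a *m J); split; first exact: submxMl.
rewrite vE linearD /= mulmxDr -[Xp in Xp *m (b *m _)^T]trmxK -trmx_mul.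
by rewrite -mulmxA mulmx_ker mulmx0 trmx0 addr0.
Qed.

Lemma residual_Sigma (lam : R[i]) (v : 'rV[R]_T) :
  (lam *: toC Xm - toC Xp + toC (B *m Um)) *m toC v^T
  = (lam%:M - toC A) *m toC (Xm *m v^T).
Proof.
rewrite [toC (Xm *m _)]toCM mulmxA; congr (_ *m _).
rewrite -addrA [- toC Xp + _]addrC -opprB -toCB XpBUm toCM.
by rewrite mulmxBl mul_scalar_mx.
Qed.

Lemma fro_data_DeltaD_sqr (J : 'M[R]_T) (lam : R[i]) (v : 'rV[R]_T) :
  Defs.proj (Splus_cap Xp J) v != 0 ->
  fro_data (DeltaD p B Xm Xp Um J lam v) ^+ 2
  = cnrm2 ((lam%:M - toC A) *m toC (Xm *m v^T))
    / nrm2 (Defs.proj (Splus_cap Xp J) v).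
Proof.
set pv := Defs.proj _ v => pv0.
have pv_gt0 := nrm2_gt0 pv0.
rewrite /fro_data /DeltaD /DeltaXp residual_Sigma fro2_outer !fro20.
rewrite add0r !addr0 /zeta -/pv nrm2Z [_^-1 ^+ 2]expr2 -mulrA mulVf ?gt_eqF //.
by rewrite mulr1 sqr_sqrtr // divr_ge0 ?cnrm2_ge0 ?nrm2_ge0.
Qed.

Lemma sigma_min_le_fro_data_DeltaD (J : 'M[R]_T) (lam : R[i]) (v : 'rV[R]_T) :
  Jstar J -> in_F Cm Xm Xp J v ->
  sigma_min (col_mx (lam%:M - toC A) (toC Cm)) * sigma_min (toC Xm)
  <= fro_data (DeltaD p B Xm Xp Um J lam v).
Proof.
move=> hJ vF; have pv0 := in_F_proj_neq0 vF.
have pv_gt0 := nrm2_gt0 pv0.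
have CXv : Cm *m (Xm *m v^T) = 0 by rewrite mulmxA; case: vF => _ [].
have h1 := sigma_min_unobs A lam CXv.
have h2 := sigma_min_row_space (in_F_sub_row_space hJ vF).
have h3 := nrm2_proj_le (Splus_cap Xp J) v.
rewrite -ler_sqr ?nnegrE ?mulr_ge0 ?sigma_min_ge0 ?fro_data_ge0 //.
rewrite (fro_data_DeltaD_sqr lam pv0) ler_pdivlMr // exprMn -mulrA.
apply: le_trans h1; rewrite ler_wpM2l ?sqr_ge0 //.
by apply: le_trans h2; rewrite ler_wpM2l ?sqr_ge0.
Qed.

Lemma d_unobs_Sigma_le (lam : R[i]) :
  (d_unobs_Sigma B Cm Xm Xp Um
   <= (sigma_min (col_mx (lam%:M - toC A) (toC Cm)))%:E)%E.
Proof.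
apply: le_trans (_ : (d_unobs Cm A <= _)%E).
  by apply: ereal_inf_lbound; exists A.
by apply: ereal_inf_lbound; exists lam.
Qed.

End Data.

Theorem theorem2 (R : realType) (n m p T : nat)
  (hn : (0 < n)%N) (hm : (0 < m)%N) (hp : (0 < p)%N) (hT : (0 < T)%N)
  (B : 'M[R]_(n, m)) (Cm : 'M[R]_(p, n)) (D : 'M[R]_(p, m))
  (Xm Xp : 'M[R]_(n, T)) (Um : 'M[R]_(m, T)) (Ym : 'M[R]_(p, T))
  (hSigma : Sigma B Xm Xp Um !=set0)
  (Jstar : 'M[R]_T) (hJ : is_Jstar B Cm D Xm Xp Um Jstar) :
  (d_unobs_Sigma B Cm Xm Xp Um * (sigma_min (toC Xm))%:E <=
   ereal_inf [set e | exists (lam : R[i]) (v : 'rV[R]_T),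
                 in_F Cm Xm Xp Jstar v /\
                 e = (fro_data (DeltaD p B Xm Xp Um Jstar lam v))%:E])%E.
Proof.
apply/ereal_infP => _ [lam [v [vF ->]]].
have [A hA] := hSigma.
apply: le_trans (lee_wpmul2r _ (d_unobs_Sigma_le Cm hA lam)) _.
  by rewrite lee_fin sigma_min_ge0.
by rewrite -EFinM lee_fin; exact: (sigma_min_le_fro_data_DeltaD hA lam hJ vF).
Qed.
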